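(* (a) Let $\Phi=B_n$ and let $D\subset\Phi^+$ be an orthogonal subset with $\varepsilon_1\in D$ and containing no root $\varepsilon_k$ with $k\ge2$ (so $D\cap\mathcal C_1=\{\varepsilon_1\}$). Let $\tilde\Phi^+=\{\varepsilon_a\pm\varepsilon_b:2\le a<b\le n\}$ (i.e. $\Phi^+\setminus(\mathcal C_1\cup\mathcal R_0)$, a positive system of type $D_{n-1}$), $\tilde D=D\cap\tilde\Phi^+=D\setminus\{\varepsilon_1\}$, $\tilde\sigma=\prod_{\beta\in\tilde D}r_\beta$, and $l'(\tilde\sigma)=\#\{\alpha\in\tilde\Phi^+:\tilde\sigma(\alpha)\notin\tilde\Phi^+\}$. Then $$l(\sigma)=l'(\tilde\sigma)+|\mathcal C_1|+2\cdot\#\{\beta\in\tilde D:\mathrm{row}(\beta)<0\},$$ where $|\mathcal C_1|=2n-1$ and $\mathrm{row}(\beta)<0$ means $\beta=\varepsilon_a+\varepsilon_b$ for some $a<b$. (b) Let $\Phi=C_n$ and let $D\subset\Phi^+$ be an orthogonal subset with $D\cap\mathcal C_1=\{2\varepsilon_1\}$. Let $\tilde\Phi^+=\Phi^+\setminus\mathcal C_1$ (a positive system of type $C_{n-1}$ in the coordinates $\varepsilon_2,\dots,\varepsilon_n$), $\tilde D=D\cap\tilde\Phi^+$, $\tilde\sigma=\prod_{\beta\in\tilde D}r_\beta$ and $l'(\tilde\sigma)=\#\{\alpha\in\tilde\Phi^+:\tilde\sigma(\alpha)\notin\tilde\Phi^+\}$. Then $l(\sigma)=l'(\tilde\sigma)+|\mathcal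 C_1|$, where $|\mathcal C_1|=2n-1$.
   Context: Let $\Phi$ be a root system of type $B_n$, $C_n$ or $D_n$ in $\mathbb R^n$ with standard basis $\varepsilon_1,\dots,\varepsilon_n$ and positive roots $\Phi^+=\{\varepsilon_i\pm\varepsilon_j:1\le i<j\le n\}\cup\Phi_1^+$, where $\Phi_1^+=\emptyset$ for $D_n$, $\{\varepsilon_i\}$ for $B_n$, $\{2\varepsilon_i\}$ for $C_n$. $D\subset\Phi^+$ is orthogonal if its roots are pairwise orthogonal. $r_\beta$ denotes the reflection in the hyperplane orthogonal to $\beta$, $\sigma=\prod_{\beta\in D}r_\beta$, and $l(\sigma)=\#\{\alpha\in\Phi^+:\sigma(\alpha)\in-\Phi^+\}$ (the length of $\sigma$ in the Weyl group). $\mathrm{col}(\varepsilon_i\pm\varepsilon_j)=\mathrm{col}(\varepsilon_i)=\mathrm{col}(2\varepsilon_i)=i$; $\mathrm{row}(\varepsilon_i\pm\varepsilon_j)=\mp j$, $\mathrm{row}(\varepsilon_i)=0$, $\mathrm{row}(2\varepsilon_i)=-i$; $\mathcal R_i=\{\alpha\in\Phi^+:\mathrm{row}(\alpha)=i\}$, $\mathcal C_j=\{\alpha\in\Phi^+:\mathrm{col}(\alpha)=j\}$. *)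

From HB Require Import structures.
From mathcomp Require Import all_boot all_order all_algebra.
Set Implicit Arguments. Unset Strict Implicit. Unset Printing Implicit Defensive.
Import Order.TTheory GRing.Theory Num.Theory.
Local Open Scope ring_scope.

Inductive rtype := TB | TC | TD.

Section Roots.
Variable n : nat.

(* standard basis vector eps_i (index i : 'I_n, i.e. eps_{i+1} in the paper) *)
Definition eps (i : 'I_n) : 'rV[rat]_n := delta_mx 0 i.

Definition dot (u v : 'rV[rat]_n) : rat := \sum_(k < n) u 0 k * v 0 k.

Definition refl (b x : 'rV[rat]_n) : 'rV[rat]_n := x - ((2 * dot x b) / dot b b) *: b.

Definition minusroots : seq 'rV[rat]_n :=
  [seq eps i - eps j | i <- enum 'I_n, j <- [seq j <- enum 'I_n | (nat_of_ord i < nat_of_ord j)%N]].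
(* eps_i + eps_j, i<j  (the roots with row < 0) *)
Definition plusroots : seq 'rV[rat]_n :=
  [seq eps i + eps j | i <- enum 'I_n, j <- [seq j <- enum 'I_n | (nat_of_ord i < nat_of_ord j)%N]].
Definition shortroots : seq 'rV[rat]_n := [seq eps i | i <- enum 'I_n].
Definition longroots : seq 'rV[rat]_n := [seq 2%:R *: eps i | i <- enum 'I_n].

Definition posroots (t : rtype) : seq 'rV[rat]_n :=
  minusroots ++ plusroots ++
  match t with TB => shortroots | TC => longroots | TD => [::] end.

Definition orthoset (t : rtype) (D : seq 'rV[rat]_n) : Prop :=
  [/\ uniq D, {subset D <= posroots t} &
      forall a b, a \in D -> b \in D -> a != b -> dot a b = 0].

(* sigma = prod_{b in D} r_b (the reflections commute since D is orthogonal) *)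
Definition sigma (D : seq 'rV[rat]_n) (x : 'rV[rat]_n) : 'rV[rat]_n :=
  foldr refl x D.

Definition wlength (Phi : seq 'rV[rat]_n) (s : 'rV[rat]_n -> 'rV[rat]_n) : nat :=
  count (fun a => - s a \in Phi) Phi.

Definition wlength' (tPhi : seq 'rV[rat]_n) (s : 'rV[rat]_n -> 'rV[rat]_n) : nat :=
  count (fun a => s a \notin tPhi) tPhi.

End Roots.

(* In dimension n.+1, index ord0 is the first coordinate eps_1. *)
Definition colone (n : nat) (t : rtype) : seq 'rV[rat]_n.+1 :=
  [seq a : 'rV[rat]_n.+1 <- @posroots n.+1 t | a 0 ord0 != 0].

Definition tPhiB (n : nat) : seq 'rV[rat]_n.+1 :=
  [seq a : 'rV[rat]_n.+1 <- @posroots n.+1 TB | (a 0 ord0 == 0) && (a \notin @shortroots n.+1)].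

Definition tPhiC (n : nat) : seq 'rV[rat]_n.+1 :=
  [seq a : 'rV[rat]_n.+1 <- @posroots n.+1 TC | a 0 ord0 == 0].

From HB Require Import structures.
From mathcomp Require Import all_boot all_order all_algebra ring.
Import Order.TTheory GRing.Theory Num.Theory.
Set Implicit Arguments. Unset Strict Implicit. Unset Printing Implicit Defensive.
Local Open Scope ring_scope.

(* Let N be the reflection in e_1 (equivalently in 2 e_1): it negates the first
   coordinate.  Every root of tD is orthogonal to e_1, so sigma D = N o tau with
   tau = sigma tD; tau fixes e_1 and preserves first coordinates, and, being an
   integral isometry built from reflections in roots, it maps roots to roots and
   each e_j (j >= 2) to a signed basis vector +-e_k with k >= 2.  Splitting Phi^+
   into three parts and counting the a with sigma D a in -Phi^+:
   - the column C_1 (e_1 +- e_j, e_1, 2 e_1): sigma D a is -e_1 +- e_k or -a, always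
     negative, contributing |C_1|;
   - the non-short roots with zero first coordinate, i.e. tPhi^+: sigma D a = tau a,
     contributing l'(tau);
   - the short roots e_j, j >= 2 (type B only): tau e_j = -e_k for exactly
     2 #{b in tD : row b < 0} indices j, which follows by comparing coordinate sums:
     sum_j s(tau e_j) = n - sum_(b in tD) 2 s(b)^2 / |b|^2, with s the coordinate sum. *)

Section InnerProduct.
Variable m : nat.
Local Notation V := 'rV[rat]_m.

Lemma epsE (i k : 'I_m) : eps i 0 k = (k == i)%:R.
Proof. by rewrite /eps mxE eqxx. Qed.

Lemma dotC (u v : V) : dot u v = dot v u.
Proof. by apply: eq_bigr => k _; rewrite mulrC. Qed.

Lemma dotDl (u v w : V) : dot (u + v) w = dot u w + dot v w.
Proof. by rewrite /dot -big_split; apply: eq_bigr => k _; rewrite mxE mulrDl. Qed.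

Lemma dotNl (u w : V) : dot (- u) w = - dot u w.
Proof. by rewrite /dot -sumrN; apply: eq_bigr => k _; rewrite mxE mulNr. Qed.

Lemma dotZl c (u w : V) : dot (c *: u) w = c * dot u w.
Proof. by rewrite /dot mulr_sumr; apply: eq_bigr => k _; rewrite mxE mulrA. Qed.

Lemma dotBl (u v w : V) : dot (u - v) w = dot u w - dot v w.
Proof. by rewrite dotDl dotNl. Qed.

Lemma dotDr (u v w : V) : dot w (u + v) = dot w u + dot w v.
Proof. by rewrite dotC dotDl !(dotC w). Qed.

Lemma dotZr c (u w : V) : dot w (c *: u) = c * dot w u.
Proof. by rewrite dotC dotZl dotC. Qed.

Lemma dotBr (u v w : V) : dot w (u - v) = dot w u - dot w v.
Proof. by rewrite dotC dotBl !(dotC w). Qed.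

Lemma dot_epsr (x : V) i : dot x (eps i) = x 0 i.
Proof.
rewrite /dot (bigD1 i) //= epsE eqxx mulr1 big1 ?addr0 // => k /negbTE kn.
by rewrite epsE kn mulr0.
Qed.

Lemma dot_epsl (x : V) i : dot (eps i) x = x 0 i.
Proof. by rewrite dotC dot_epsr. Qed.

Lemma dot_eps (i j : 'I_m) : dot (eps i) (eps j) = (i == j)%:R.
Proof. by rewrite dot_epsr epsE eq_sym. Qed.

End InnerProduct.

Section Roots.
Variable m : nat.
Local Notation V := 'rV[rat]_m.

Lemma ord_ltn_eqF (i j : 'I_m) : (i < j)%N -> (i == j) = false.
Proof. by move=> ij; apply/negbTE; rewrite -val_eqE neq_ltn ij. Qed.

Lemma ord_ltn_neq (i j : 'I_m) : (i < j)%N -> i != j.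
Proof. by move/ord_ltn_eqF ->. Qed.

Lemma mem_minusroots (i j : 'I_m) : (i < j)%N -> eps i - eps j \in minusroots m.
Proof.
move=> ij; apply/allpairsPdep; exists i, j; split => //; first by rewrite mem_enum.
by rewrite mem_filter ij mem_enum.
Qed.

Lemma mem_plusroots (i j : 'I_m) : (i < j)%N -> eps i + eps j \in plusroots m.
Proof.
move=> ij; apply/allpairsPdep; exists i, j; split => //; first by rewrite mem_enum.
by rewrite mem_filter ij mem_enum.
Qed.

Lemma mem_shortroots (i : 'I_m) : eps i \in shortroots m.
Proof. by apply/mapP; exists i; rewrite ?mem_enum. Qed.

Lemma mem_longroots (i : 'I_m) : 2%:R *: eps i \in longroots m.
Proof. by apply/mapP; exists i; rewrite ?mem_enum. Qed.

Lemma minusrootsP (a : V) :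
  a \in minusroots m -> exists i j : 'I_m, (i < j)%N /\ a = eps i - eps j.
Proof. by case/allpairsPdep => i [j [_ + ->]]; rewrite mem_filter => /andP[ij _]; exists i, j. Qed.

Lemma plusrootsP (a : V) :
  a \in plusroots m -> exists i j : 'I_m, (i < j)%N /\ a = eps i + eps j.
Proof. by case/allpairsPdep => i [j [_ + ->]]; rewrite mem_filter => /andP[ij _]; exists i, j. Qed.

Lemma shortrootsP (a : V) : a \in shortroots m -> exists i, a = eps i.
Proof. by case/mapP => i _ ->; exists i. Qed.

Lemma longrootsP (a : V) : a \in longroots m -> exists i, a = 2%:R *: eps i.
Proof. by case/mapP => i _ ->; exists i. Qed.

Lemma posrootsP t (a : V) : a \in posroots m t ->
  [\/ a \in minusroots m, a \in plusroots m,
      t = TB /\ a \in shortroots m | t = TC /\ a \in longroots m].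
Proof.
rewrite /posroots !mem_cat => /orP[|/orP[]]; try by move=> h; constructor.
by case: t => // h; [apply: Or43 | apply: Or44].
Qed.

Lemma norm_minus (i j : 'I_m) : i != j -> dot (eps i - eps j) (eps i - eps j) = 2%:R.
Proof.
move=> ij; rewrite dotBl !dotBr !dot_eps eqxx (negbTE ij) eq_sym (negbTE ij).
by rewrite !eqxx subr0 sub0r opprK.
Qed.

Lemma norm_plus (i j : 'I_m) : i != j -> dot (eps i + eps j) (eps i + eps j) = 2%:R.
Proof.
move=> ij; rewrite dotDl !dotDr !dot_eps !eqxx (negbTE ij) eq_sym (negbTE ij).
by rewrite addr0 add0r.
Qed.

Lemma norm_short (i : 'I_m) : dot (eps i) (eps i) = 1.
Proof. by rewrite dot_eps eqxx. Qed.

Lemma norm_long (i : 'I_m) : dot (2%:R *: eps i) (2%:R *: eps i) = 4%:R.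
Proof. by rewrite dotZl dotZr dot_eps eqxx mulr1. Qed.

Lemma posroot_norm_neq0 t (a : V) : a \in posroots m t -> dot a a != 0.
Proof.
case/posrootsP => [/minusrootsP[i [j [ij ->]]] | /plusrootsP[i [j [ij ->]]]
                  | [_ /shortrootsP[i ->]] | [_ /longrootsP[i ->]]].
- by rewrite norm_minus ?ord_ltn_neq.
- by rewrite norm_plus ?ord_ltn_neq.
- by rewrite norm_short.
- by rewrite norm_long.
Qed.

Definition lexpos (y : V) : Prop :=
  exists i : 'I_m, 0 < y 0 i /\ forall k : 'I_m, (k < i)%N -> y 0 k = 0.

Lemma lexpos_opp (y : V) : lexpos y -> ~ lexpos (- y).
Proof.
move=> [i [yi yk]] [j [yj yk']].
case: (ltngtP i j) => [ij|ji|/val_inj e].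
- by move: (yk' _ ij); rewrite mxE => /eqP; rewrite oppr_eq0 => /eqP h; move: yi; rewrite h ltxx.
- by move: yj; rewrite mxE (yk _ ji) oppr0 ltxx.
- by move: yj; rewrite mxE -e oppr_gt0 => h; move: (lt_trans h yi); rewrite ltxx.
Qed.

Lemma posroot_lexpos t (a : V) : a \in posroots m t -> lexpos a.
Proof.
case/posrootsP => [/minusrootsP[i [j [ij ->]]] | /plusrootsP[i [j [ij ->]]]
                  | [_ /shortrootsP[i ->]] | [_ /longrootsP[i ->]]];
  exists i; rewrite !mxE ?eqxx ?ord_ltn_eqF //=.
all: split; rewrite ?subr0 ?addr0 ?mulr1 //; move=> k ki.
all: by rewrite !mxE ?eqxx ?(ord_ltn_eqF ki) ?(ord_ltn_eqF (ltn_trans ki ij)) ?subr0 ?addr0 ?mulr0.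
Qed.

Lemma posroot_opp t (a : V) : a \in posroots m t -> - a \notin posroots m t.
Proof.
by move=> h; apply/negP => h'; case: (lexpos_opp (posroot_lexpos h) (posroot_lexpos h')).
Qed.

End Roots.

Section RootNorms.
Variable m : nat.
Local Notation V := 'rV[rat]_m.

Lemma norm_nonshort (a : V) :
  a \in minusroots m ++ plusroots m ++ longroots m -> dot a a != 1.
Proof.
rewrite !mem_cat => /or3P[/minusrootsP[i [j [ij ->]]] | /plusrootsP[i [j [ij ->]]]
                         | /longrootsP[i ->]].
- by rewrite norm_minus ?ord_ltn_neq // pnatr_eq1.
- by rewrite norm_plus ?ord_ltn_neq // pnatr_eq1.
- by rewrite norm_long pnatr_eq1.
Qed.

Lemma nonshort_notin (a : V) :
  a \in minusroots m ++ plusroots m ++ longroots m -> a \notin shortroots m.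
Proof.
move=> aN; apply/negP => /shortrootsP[i ea].
by move: (norm_nonshort aN); rewrite ea norm_short eqxx.
Qed.

Variable t : rtype.
Local Notation Phi := (posroots m t).

Lemma posroot_split (a : V) :
  a \in Phi -> t = TB /\ a \in shortroots m \/ a \in minusroots m ++ plusroots m ++ longroots m.
Proof.
case/posrootsP => [am | ap | sh | [_ al]]; [right | right | by left | right].
all: by rewrite !mem_cat ?am ?ap ?al ?orbT.
Qed.

Lemma posroot_shortE (a : V) : a \in Phi -> (a \in shortroots m) = (dot a a == 1).
Proof.
case/posroot_split => [[_ /shortrootsP[i ->]] | aN].
  by rewrite mem_shortroots norm_short eqxx.
by rewrite (negbTE (nonshort_notin aN)) (negbTE (norm_nonshort aN)).
Qed.

Lemma posroot_short_TB (a : V) : a \in Phi -> a \in shortroots m -> t = TB.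
Proof. by case/posroot_split => [[] // | /nonshort_notin/negbTE ->]. Qed.

Lemma eps_notin_posroots (j : 'I_m) : t <> TB -> eps j \notin Phi.
Proof. by move=> ntB; apply/negP => /posroot_short_TB /(_ (mem_shortroots j)). Qed.

End RootNorms.

Section Reflections.
Variable m : nat.
Local Notation V := 'rV[rat]_m.

Lemma reflD (b x y : V) : refl b (x + y) = refl b x + refl b y.
Proof. by rewrite /refl dotDl mulrDr mulrDl scalerDl opprD addrACA. Qed.

Lemma reflZ (b x : V) c : refl b (c *: x) = c *: refl b x.
Proof. by rewrite /refl dotZl scalerBr scalerA mulrCA -!mulrA. Qed.

Lemma refl_orth (b x : V) : dot x b = 0 -> refl b x = x.
Proof. by move=> h; rewrite /refl h mulr0 mul0r scale0r subr0. Qed.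

Lemma refl_dot (b x y : V) : dot b b != 0 -> dot (refl b x) (refl b y) = dot x y.
Proof.
by move=> b0; rewrite /refl !dotBl !dotBr !dotZl !dotZr (dotC b y); field.
Qed.

Lemma sigmaD (D : seq V) x y : sigma D (x + y) = sigma D x + sigma D y.
Proof. by elim: D => //= b D IH; rewrite IH reflD. Qed.

Lemma sigmaZ (D : seq V) c x : sigma D (c *: x) = c *: sigma D x.
Proof. by elim: D => //= b D IH; rewrite IH reflZ. Qed.

Lemma sigma_dot (D : seq V) x y : (forall b, b \in D -> dot b b != 0) ->
  dot (sigma D x) (sigma D y) = dot x y.
Proof.
elim: D => //= b D IH D0; rewrite refl_dot ?D0 ?mem_head // IH // => c cD.
by apply: D0; rewrite in_cons cD orbT.
Qed.

Lemma sigma_fix (D : seq V) x : (forall b, b \in D -> dot x b = 0) -> sigma D x = x.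
Proof.
elim: D => //= b D IH xD; rewrite IH ?refl_orth ?xD ?mem_head // => c cD.
by apply: xD; rewrite in_cons cD orbT.
Qed.

End Reflections.

(* Integral vectors are preserved by reflections in roots (coroots are integral);
   those of norm 1 are the signed basis vectors. *)
Section IntegralVectors.
Variable m : nat.
Local Notation V := 'rV[rat]_m.

Definition intvec (x : V) : Prop := forall k, x 0 k \is a Num.int.

Lemma intvec_eps i : intvec (eps i).
Proof. by move=> k; rewrite epsE natr_int. Qed.

Lemma intvecB x y : intvec x -> intvec y -> intvec (x - y).
Proof. by move=> hx hy k; rewrite !mxE rpredB. Qed.

Lemma intvecD x y : intvec x -> intvec y -> intvec (x + y).
Proof. by move=> hx hy k; rewrite mxE rpredD. Qed.

Lemma intvecZ c x : c \is a Num.int -> intvec x -> intvec (c *: x).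
Proof. by move=> hc hx k; rewrite mxE rpredM. Qed.

Lemma dot_int x y : intvec x -> intvec y -> dot x y \is a Num.int.
Proof. by move=> hx hy; apply: rpred_sum => k _; rewrite rpredM. Qed.

Lemma posroot_int t (b : V) : b \in posroots m t -> intvec b.
Proof.
case/posrootsP => [/minusrootsP[i [j [_ ->]]] | /plusrootsP[i [j [_ ->]]]
                  | [_ /shortrootsP[i ->]] | [_ /longrootsP[i ->]]].
- by apply: intvecB; apply: intvec_eps.
- by apply: intvecD; apply: intvec_eps.
- exact: intvec_eps.
- by apply: intvecZ; [apply: natr_int | apply: intvec_eps].
Qed.

Lemma coroot_int t (b x : V) : b \in posroots m t -> intvec x ->
  2 * dot x b / dot b b \is a Num.int.
Proof.
move=> bP xZ; have bZ := posroot_int bP.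
case/posrootsP: bP bZ => [/minusrootsP[i [j [ij ->]]] | /plusrootsP[i [j [ij ->]]]
                         | [_ /shortrootsP[i ->]] | [_ /longrootsP[i ->]]] bZ.
- by rewrite norm_minus ?ord_ltn_neq // [2 * _]mulrC mulfK // dot_int.
- by rewrite norm_plus ?ord_ltn_neq // [2 * _]mulrC mulfK // dot_int.
- by rewrite norm_short divr1 rpredM ?natr_int ?dot_int.
- by rewrite norm_long dotZr dot_epsr mulrA -natrM [_ * x 0 i]mulrC mulfK.
Qed.

Lemma sigma_int t (D : seq V) x : {subset D <= posroots m t} -> intvec x -> intvec (sigma D x).
Proof.
elim: D => //= b D IH Dpos xZ.
have bP : b \in posroots m t by apply: Dpos; rewrite mem_head.
have yZ : intvec (sigma D x) by apply: IH => // c cD; apply: Dpos; rewrite in_cons cD orbT.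
by apply: intvecB => //; apply: intvecZ; [apply: coroot_int bP yZ | apply: posroot_int bP].
Qed.

Definition sv (s : bool) (k : 'I_m) : V := (-1) ^+ s *: eps k.

Lemma sv_false k : sv false k = eps k.
Proof. by rewrite /sv expr0 scale1r. Qed.

Lemma sv_opp s k : - sv s k = sv (~~ s) k.
Proof. by case: s; rewrite /sv /= ?expr1 ?expr0 ?scaleN1r ?scale1r ?opprK. Qed.

Lemma signr_sv (s r : bool) (k : 'I_m) : (-1) ^+ s *: sv r k = sv (s (+) r) k.
Proof. by rewrite /sv scalerA -signr_addb. Qed.

Lemma sv_dot s1 s2 (k l : 'I_m) :
  dot (sv s1 k) (sv s2 l) = (-1) ^+ s1 * ((-1) ^+ s2 * (k == l)%:R).
Proof. by rewrite /sv dotZl dotZr dot_eps. Qed.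

Lemma intvec_norm1 (y : V) : intvec y -> dot y y = 1 -> exists k s, y = sv s k.
Proof.
move=> yZ y1.
have sq0 j : 0 <= y 0 j * y 0 j by rewrite -expr2 sqr_ge0.
case: (pickP (fun k => y 0 k != 0)) => [k /= yk | y0]; last first.
  move: y1; rewrite /dot big1 => [/eqP|j _]; first by rewrite eq_sym oner_eq0.
  by move/negbFE/eqP: (y0 j) => ->; rewrite mul0r.
move: y1; rewrite /dot (bigD1 k) //= => y1.
have yk1 : 1 <= y 0 k * y 0 k by rewrite -expr2 sqr_intr_ge1.
have rest_ge0 : 0 <= \sum_(j | j != k) y 0 j * y 0 j by apply: sumr_ge0 => j _.
have rest0 : \sum_(j | j != k) y 0 j * y 0 j = 0.
  by apply/eqP; rewrite eq_le rest_ge0 andbT -(lerD2l (y 0 k * y 0 k)) y1 addr0.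
have yj0 j : j != k -> y 0 j = 0.
  move=> jk; move: (psumr_eq0P (fun j _ => sq0 j) rest0 jk) => /eqP.
  by rewrite mulf_eq0 orbb => /eqP.
have : y 0 k ^+ 2 == 1 by rewrite expr2 -y1 rest0 addr0.
rewrite sqrf_eq1 => /orP[] /eqP yk_val; [exists k, false | exists k, true].
all: apply/rowP => j; rewrite mxE epsE; case: (eqVneq j k) => [->|jk]; last by rewrite yj0 ?mulr0.
all: by rewrite yk_val ?expr0 ?expr1 ?mulr1.
Qed.

End IntegralVectors.

Section SignedPairs.
Variables (m : nat) (t : rtype).
Local Notation V := 'rV[rat]_m.
Local Notation Phi := (posroots m t).

Lemma posroots_oppE (v : V) : v \in Phi \/ - v \in Phi -> (- v \in Phi) = (v \notin Phi).
Proof.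
case=> h; first by rewrite h (negbTE (posroot_opp h)).
by move: (posroot_opp h); rewrite opprK => /negbTE ->; rewrite h.
Qed.

Lemma svpair_root s1 s2 (k l : 'I_m) : k != l ->
  sv s1 k + sv s2 l \in Phi \/ - (sv s1 k + sv s2 l) \in Phi.
Proof.
wlog kl : s1 s2 k l / (k < l)%N.
  move=> W kl; case: (ltngtP k l) => [h|h|/val_inj h]; first exact: W.
  - by rewrite addrC; apply: W => //; rewrite eq_sym.
  - by move: kl; rewrite h eqxx.
move=> _; rewrite /posroots !mem_cat.
case: s1; case: s2; rewrite /sv /= ?expr1 ?expr0 ?scaleN1r ?scale1r.
- by right; rewrite opprD !opprK (mem_plusroots kl) ?orbT.
- by right; rewrite opprD opprK (mem_minusroots kl).
- by left; rewrite (mem_minusroots kl).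
- by left; rewrite (mem_plusroots kl) ?orbT.
Qed.

Lemma scaled_sv_root c r (k : 'I_m) :
  c *: eps k \in Phi -> c *: sv r k \in Phi \/ - (c *: sv r k) \in Phi.
Proof.
by case: r; rewrite /sv ?expr1 ?expr0 ?scaleN1r ?scale1r ?scalerN ?opprK; [right | left].
Qed.

Lemma posroot_cases (a : V) : a \in Phi ->
  [\/ exists (i j : 'I_m) s, (i < j)%N /\ a = sv false i + sv s j,
      t = TB /\ exists i, a = eps i | t = TC /\ exists i, a = 2%:R *: eps i].
Proof.
case/posrootsP => [/minusrootsP[i [j [ij ->]]] | /plusrootsP[i [j [ij ->]]]
                  | [tB /shortrootsP[i ->]] | [tC /longrootsP[i ->]]].
- by apply: Or31; exists i, j, true; rewrite /sv expr0 expr1 scale1r scaleN1r.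
- by apply: Or31; exists i, j, false; rewrite /sv expr0 !scale1r.
- by apply: Or32; split => //; exists i.
- by apply: Or33; split => //; exists i.
Qed.

End SignedPairs.

Section SigmaRoots.
Variables (m : nat) (t : rtype) (E : seq 'rV[rat]_m).
Hypothesis E_pos : {subset E <= posroots m t}.
Local Notation tau := (sigma E).

Lemma sigma_roots_dot x y : dot (tau x) (tau y) = dot x y.
Proof. by apply: sigma_dot => b /E_pos /posroot_norm_neq0. Qed.

Lemma sigma_eps_sv j : exists k s, tau (eps j) = sv s k.
Proof.
apply: intvec_norm1; first by apply: (sigma_int E_pos); apply: intvec_eps.
by rewrite sigma_roots_dot norm_short.
Qed.

Lemma sigma_sv_sv s j : exists k r, tau (sv s j) = sv r k.
Proof. by have [k [r e]] := sigma_eps_sv j; exists k, (s (+) r); rewrite sigmaZ e signr_sv. Qed.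

Lemma sigma_sv_inj j j' s s' k k' r r' :
  j != j' -> tau (sv s j) = sv r k -> tau (sv s' j') = sv r' k' -> k != k'.
Proof.
move=> jj' e e'; apply/negP => /eqP kk'.
have := sigma_roots_dot (sv s j) (sv s' j').
rewrite e e' !sv_dot (negbTE jj') kk' eqxx !mulr0 mulr1.
by move/eqP; rewrite mulf_eq0 !signr_eq0.
Qed.

Lemma sigma_posroot a : a \in posroots m t -> tau a \in posroots m t \/ - tau a \in posroots m t.
Proof.
case/posroot_cases => [[i [j [s [ij ->]]]] | [tB [i ->]] | [tC [i ->]]].
- have [k [r e]] := sigma_sv_sv false i; have [l [r' e']] := sigma_sv_sv s j.
  by rewrite sigmaD e e'; apply: svpair_root; apply: sigma_sv_inj e e'; apply: ord_ltn_neq.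
- have [k [r e]] := sigma_eps_sv i; rewrite e -[sv r k]scale1r.
  by apply: scaled_sv_root; rewrite scale1r tB /posroots !mem_cat mem_shortroots !orbT.
- have [k [r e]] := sigma_eps_sv i; rewrite sigmaZ e.
  by apply: scaled_sv_root; rewrite tC /posroots !mem_cat mem_longroots !orbT.
Qed.

End SigmaRoots.

Section Tau.
Variables (n : nat) (t : rtype) (tD : seq 'rV[rat]_n.+1).
Hypotheses (tD_pos : {subset tD <= posroots n.+1 t})
  (tD_first0 : forall b, b \in tD -> b 0 ord0 = 0).
Local Notation tau := (sigma tD).

Lemma tau_eps0 : tau (eps ord0) = eps ord0.
Proof. by apply: sigma_fix => b bD; rewrite dot_epsl tD_first0. Qed.

Lemma tau_first x : tau x 0 ord0 = x 0 ord0.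
Proof. by rewrite -!dot_epsr -tau_eps0 (sigma_roots_dot tD_pos) tau_eps0. Qed.

Lemma tau_sv_neq0 s j : j != ord0 -> exists k r, k != ord0 /\ tau (sv s j) = sv r k.
Proof.
move=> j0; have [k [r e]] := sigma_sv_sv tD_pos s j; exists k, r; split => //.
have e0 : tau (sv false ord0) = sv false ord0 by rewrite !sv_false tau_eps0.
exact: (sigma_sv_inj tD_pos j0 e e0).
Qed.

End Tau.

Section CoordinateSum.
Variable m : nat.
Local Notation V := 'rV[rat]_m.

(* The coordinate sum of a vector, written as a pairing to inherit linearity. *)
Definition csum (y : V) : rat := dot y (const_mx 1).

Lemma csumE (y : V) : csum y = \sum_(j < m) y 0 j.
Proof. by apply: eq_bigr => j _; rewrite mxE mulr1. Qed.

Lemma csum_eps k : csum (eps k) = 1.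
Proof. by rewrite /csum dot_epsl mxE. Qed.

Lemma csum_sv s k : csum (sv s k) = (-1) ^+ s.
Proof. by rewrite /csum dotZl -/(csum _) csum_eps mulr1. Qed.

Lemma sum_csum_sigma (D : seq V) : uniq D ->
  (forall a b, a \in D -> b \in D -> a != b -> dot a b = 0) ->
  (forall b, b \in D -> dot b b != 0) ->
  \sum_(j < m) csum (sigma D (eps j)) = m%:R - \sum_(b <- D) 2 * csum b ^+ 2 / dot b b.
Proof.
elim: D => [_ _ _|b D IH /= /andP[bD Du] Dorth Dnorm].
  by rewrite big_nil subr0 (eq_bigr (fun _ => 1)) ?sumr_const ?card_ord // => j _; rewrite csum_eps.
have orthD a c : a \in D -> c \in D -> a != c -> dot a c = 0.
  by move=> aD cD; apply: Dorth; rewrite in_cons ?aD ?cD orbT.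
have normD c : c \in D -> dot c c != 0 by move=> cD; apply: Dnorm; rewrite in_cons cD orbT.
have fix_b : sigma D b = b.
  apply: sigma_fix => c cD; apply: Dorth; rewrite ?mem_head ?in_cons ?cD ?orbT //.
  by apply: contraNneq bD => ->.
have pair_b j : dot (sigma D (eps j)) b = b 0 j.
  by rewrite -{1}fix_b sigma_dot // dot_epsl.
rewrite (eq_bigr (fun j => csum (sigma D (eps j)) - b 0 j * (2 * csum b / dot b b))).
  rewrite sumrB IH // big_cons -mulr_suml -csumE; ring.
by move=> j _; rewrite /= /csum /refl dotBl dotZl pair_b -/(csum _); ring.
Qed.

Lemma csum_minusroot (b : V) : b \in minusroots m -> csum b = 0.
Proof. by case/minusrootsP => i [j [_ ->]]; rewrite /csum dotBl -!/(csum _) !csum_eps subrr. Qed.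

Lemma csum_plusroot (b : V) : b \in plusroots m -> csum b = 2%:R.
Proof. by case/plusrootsP => i [j [_ ->]]; rewrite /csum dotDl -!/(csum _) !csum_eps. Qed.

End CoordinateSum.

Section FirstReflection.
Variable n : nat.
Local Notation V := 'rV[rat]_n.+1.

Definition negfirst (x : V) : V := x - (2 * x 0 ord0) *: eps ord0.

Lemma eps_first (i : 'I_n.+1) : eps i 0 ord0 = (i == ord0)%:R.
Proof. by rewrite epsE eq_sym. Qed.

Lemma sv_first s (j : 'I_n.+1) : j != ord0 -> sv s j 0 ord0 = 0.
Proof. by move=> j0; rewrite mxE eps_first (negbTE j0) mulr0. Qed.

Lemma refl_eps0 x : refl (eps ord0) x = negfirst x.
Proof. by rewrite /refl dot_epsr norm_short divr1. Qed.

Lemma refl_2eps0 x : refl (2%:R *: eps ord0) x = negfirst x.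
Proof.
rewrite /refl norm_long dotZr dot_epsr scalerA /negfirst; congr (_ - _ *: _).
by rewrite mulrA -natrM [_ * x 0 ord0]mulrC mulfK // mulrC.
Qed.

Lemma negfirst_id (y : V) : y 0 ord0 = 0 -> negfirst y = y.
Proof. by move=> h; rewrite /negfirst h mulr0 scale0r subr0. Qed.

Lemma negfirst_eps0D c (w : V) : w 0 ord0 = 0 -> negfirst (c *: eps ord0 + w) = w - c *: eps ord0.
Proof.
move=> w0; rewrite /negfirst mxE w0 addr0 mxE epsE eqxx mulr1.
by rewrite mulr_natl mulr2n scalerDl opprD addrA [c *: _ + w]addrC addrK.
Qed.

Lemma refl_negfirst (b x : V) : b 0 ord0 = 0 -> refl b (negfirst x) = negfirst (refl b x).
Proof.
move=> b0; rewrite /negfirst /refl dotBl dotZl dot_epsl b0 mulr0 subr0.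
by rewrite !mxE b0 mulr0 oppr0 addr0 addrAC.
Qed.

Lemma sigma_negfirst (r0 : V) (D : seq V) x : (forall y, refl r0 y = negfirst y) ->
  (forall b, b \in D -> b != r0 -> b 0 ord0 = 0) -> uniq D -> r0 \in D ->
  sigma D x = negfirst (sigma [seq b <- D | b != r0] x).
Proof.
move=> r0E; elim: D => //= b D IH D0 /andP[bD Du].
case: (eqVneq b r0) => [eb _ | br0] /=.
  subst b; rewrite r0E; congr (negfirst (sigma _ x)); rewrite -{1}(filter_predT D).
  by apply: eq_in_filter => c cD /=; apply/esym; apply: contraNneq bD => <-.
rewrite in_cons eq_sym (negbTE br0) /= => r0D.
have D0' c : c \in D -> c != r0 -> c 0 ord0 = 0 by move=> cD; apply: D0; rewrite in_cons cD orbT.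
by rewrite IH // refl_negfirst // D0 ?mem_head.
Qed.

End FirstReflection.

Lemma natr_count (T : Type) (a : pred T) (s : seq T) :
  (count a s)%:R = \sum_(x <- s) (a x)%:R :> rat.
Proof. by elim: s => [|x s IH]; rewrite ?big_nil ?big_cons //= natrD IH. Qed.

(* For an orthogonal set E of roots e_a +- e_b, sigma E sends exactly
   2 #{b in E : b = e_a + e_b} basis vectors to negatives of basis vectors.
   Proof: compare both sides of sum_csum_sigma. *)
Section NegativeImages.
Variables (m : nat) (E : seq 'rV[rat]_m).
Hypotheses (E_uniq : uniq E) (E_pos : {subset E <= posroots m TD})
  (E_orth : forall a b, a \in E -> b \in E -> a != b -> dot a b = 0).

Lemma neg_count :
  count (fun j => - sigma E (eps j) \in posroots m TB) (enum 'I_m) =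
  (2 * count (mem (plusroots m)) E)%N.
Proof.
set P := fun j => _.
have per_j j : 1 - csum (sigma E (eps j)) = 2 * (P j)%:R.
  rewrite /P; have [k [s ->]] := sigma_eps_sv E_pos j.
  have ek : eps k \in posroots m TB by rewrite /posroots !mem_cat mem_shortroots !orbT.
  rewrite csum_sv; case: s; rewrite /sv ?expr1 ?expr0 ?scaleN1r ?scale1r ?opprK ?ek.
  - by rewrite mulr1.
  - by rewrite (negbTE (posroot_opp ek)) mulr0 subrr.
have per_b b : b \in E -> 2 * csum b ^+ 2 / dot b b = 4 * (b \in plusroots m)%:R.
  move=> bE; case/posrootsP: (E_pos bE) => [bm | bp | [//] | [//]]; last first.
    have [i [j [ij ->]]] := plusrootsP bp.
    by rewrite mem_plusroots // csum_plusroot ?mem_plusroots // norm_plus ?ord_ltn_neq.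
  have -> : b \in plusroots m = false.
    by apply/negP => /csum_plusroot; rewrite csum_minusroot // => /eqP; rewrite eq_sym pnatr_eq0.
  by rewrite csum_minusroot // expr0n !mulr0 mul0r.
have key : 2 * (count P (enum 'I_m))%:R = 4 * (count (mem (plusroots m)) E)%:R :> rat.
  rewrite !natr_count !mulr_sumr -(eq_bigr _ (fun j _ => per_j j)) big_enum /=.
  rewrite sumrB sumr_const card_ord sum_csum_sigma // => [|b /E_pos /posroot_norm_neq0 //].
  by rewrite opprB addrC subrK; apply: eq_big_seq => b /per_b.
apply/eqP; rewrite -(eqn_pmul2l (_ : 0 < 2)%N) // mulnA -(eqr_nat rat) !natrM key.
by rewrite -mulrA -natrM.
Qed.

End NegativeImages.

Definition tPhi (n : nat) (t : rtype) : seq 'rV[rat]_n.+1 :=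
  [seq a : 'rV[rat]_n.+1 <- posroots n.+1 t | (a 0 ord0 == 0) && (a \notin shortroots n.+1)].

Lemma count_split (T : Type) (p q : pred T) (s : seq T) :
  count p s = (count (predI p q) s + count (predI p (predC q)) s)%N.
Proof. by elim: s => //= x s ->; rewrite addnACA; case: (p x); case: (q x). Qed.

Section FirstColumn.
Variables (n : nat) (t : rtype) (D tD : seq 'rV[rat]_n.+1).
Hypotheses (tD_pos : {subset tD <= posroots n.+1 t})
  (tD_first0 : forall b, b \in tD -> b 0 ord0 = 0)
  (sigmaE : forall x, sigma D x = negfirst (sigma tD x)).
Local Notation tau := (sigma tD).
Local Notation Phi := (posroots n.+1 t).

Lemma eps0_sv_root s (k : 'I_n.+1) : k != ord0 -> eps ord0 + sv s k \in Phi.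
Proof.
move=> k0; have lt0k : (@ord0 n < k)%N by rewrite lt0n.
rewrite /posroots !mem_cat.
case: s; rewrite /sv ?expr1 ?expr0 ?scaleN1r ?scale1r.
  by rewrite (mem_minusroots lt0k).
by rewrite (mem_plusroots lt0k) orbT.
Qed.

Lemma colone_neg a : a \in Phi -> a 0 ord0 != 0 -> - sigma D a \in Phi.
Proof.
move=> aP; rewrite sigmaE.
case/posroot_cases: (aP) => [[i [j [s [ij ea]]]] | [_ [i ea]] | [_ [i ea]]]; rewrite ea.
- have j0 : j != ord0 by rewrite -lt0n (leq_ltn_trans _ ij).
  rewrite mxE (sv_first s j0) addr0 mxE eps_first expr0 mul1r pnatr_eq0 eqb0 negbK => /eqP i0.
  have [k [r [k0 e]]] := tau_sv_neq0 tD_pos tD_first0 s j0.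
  rewrite i0 sv_false sigmaD (tau_eps0 tD_first0) e.
  by rewrite -[eps ord0]scale1r negfirst_eps0D ?sv_first // scale1r opprB sv_opp eps0_sv_root.
- rewrite eps_first pnatr_eq0 eqb0 negbK => /eqP i0; rewrite i0 in ea *.
  rewrite (tau_eps0 tD_first0) -[eps ord0]scale1r -[_ *: _]addr0 negfirst_eps0D ?mxE //.
  by rewrite sub0r opprK scale1r -ea.
- rewrite mxE eps_first -natrM pnatr_eq0 muln_eq0 /= eqb0 negbK => /eqP i0; rewrite i0 in ea *.
  rewrite sigmaZ (tau_eps0 tD_first0) -[_ *: _]addr0 negfirst_eps0D ?mxE //.
  by rewrite sub0r opprK -ea.
Qed.

Lemma tPhi_neg a : a \in Phi -> a 0 ord0 = 0 -> (- sigma D a \in Phi) = (tau a \notin Phi).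
Proof.
move=> aP a0; rewrite sigmaE negfirst_id ?(tau_first tD_pos tD_first0) //.
by rewrite posroots_oppE //; apply: (sigma_posroot tD_pos).
Qed.

Lemma tau_mem_tPhi a : a \in Phi -> a 0 ord0 = 0 -> a \notin shortroots n.+1 ->
  (tau a \in tPhi n t) = (tau a \in Phi).
Proof.
move=> aP a0 ns; rewrite mem_filter (tau_first tD_pos tD_first0) a0 eqxx /=.
apply: andb_idl => taP.
by rewrite (posroot_shortE taP) (sigma_roots_dot tD_pos) -(posroot_shortE aP).
Qed.

Lemma short_neg j : t = TB ->
  (- sigma D (eps j) \in Phi) && (eps j 0 ord0 == 0) = (- tau (eps j) \in Phi).
Proof.
move=> tB; rewrite eps_first; case: (eqVneq j ord0) => [->|j0].
  have e0P : eps (@ord0 n) \in Phi by rewrite tB /posroots !mem_cat mem_shortroots !orbT.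
  by rewrite oner_eq0 andbF (tau_eps0 tD_first0) (negbTE (posroot_opp e0P)).
by rewrite eqxx andbT sigmaE negfirst_id // (tau_first tD_pos tD_first0) eps_first (negbTE j0).
Qed.

Lemma count_colone :
  count (fun a => (- sigma D a \in Phi) && (a 0 ord0 != 0)) Phi = size (colone n t).
Proof.
rewrite -count_filter -/(colone n t) -count_predT; apply: eq_in_count => a.
by rewrite mem_filter => /andP[a0 aP]; apply: colone_neg.
Qed.

Lemma count_tPhi :
  count (fun a => [&& - sigma D a \in Phi, a 0 ord0 == 0 & a \notin shortroots n.+1]) Phi
  = wlength' (tPhi n t) tau.
Proof.
rewrite /wlength' /tPhi count_filter; apply: eq_in_count => a aP /=.
case: eqP => [a0 | _]; last by rewrite !andbF.
case: (boolP (a \in _)) => [_ | ns]; first by rewrite !andbF.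
by rewrite tPhi_neg // tau_mem_tPhi // !andbT.
Qed.

Lemma count_short :
  count (fun a => [&& - sigma D a \in Phi, a 0 ord0 == 0 & a \in shortroots n.+1]) Phi
  = count (fun j => (eps j \in Phi) && (- tau (eps j) \in Phi)) (enum 'I_n.+1).
Proof.
set P := fun a => [&& _, _ & _].
have [tB | ntB] : t = TB \/ t <> TB by case: (t); [left | right | right].
  have shortE : (match t with TB => shortroots n.+1 | TC => longroots n.+1 | TD => [::] end)
      = shortroots n.+1 by rewrite tB.
  have no_short (s : seq 'rV[rat]_n.+1) :
      {subset s <= minusroots n.+1 ++ plusroots n.+1 ++ longroots n.+1} -> count P s = 0%N.
    move=> sN; rewrite (@eq_in_count _ _ pred0) ?count_pred0 // => a /sN /nonshort_notin.
    by rewrite /P => /negbTE ->; rewrite !andbF.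
  rewrite [X in count _ X = _]/posroots !count_cat shortE.
  rewrite (no_short (minusroots n.+1)) => [|a am]; last by rewrite mem_cat am.
  rewrite (no_short (plusroots n.+1)) => [|a ap]; last by rewrite !mem_cat ap orbT.
  rewrite /shortroots count_map; apply: eq_count => j /=.
  have ejP : eps j \in Phi by rewrite /posroots shortE !mem_cat mem_shortroots !orbT.
  by rewrite /P mem_shortroots andbT short_neg // ejP.
rewrite !(@eq_in_count _ _ pred0) ?count_pred0 // => [j _ | a aP] /=.
  by rewrite (negbTE (eps_notin_posroots j ntB)).
by apply/negbTE/and3P => -[_ _ /(posroot_short_TB aP)].
Qed.

Lemma wlength_decomp : wlength Phi (sigma D) =
  (size (colone n t) + wlength' (tPhi n t) tau
   + count (fun j => (eps j \in Phi) && (- tau (eps j) \in Phi)) (enum 'I_n.+1))%N.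
Proof.
rewrite -count_colone -count_tPhi -count_short /wlength.
set p := fun a => - sigma D a \in Phi.
pose q1 := fun a : 'rV[rat]_n.+1 => a 0 ord0 != 0.
rewrite (count_split p q1) (count_split (predI p (predC q1)) (mem (shortroots n.+1))).
rewrite [in RHS]addnAC -addnA; congr (_ + (_ + _))%N; apply: eq_count => a /=.
all: by rewrite /p /q1 ?negbK -?andbA.
Qed.

End FirstColumn.

Lemma tPhiB_tPhi n : tPhiB n = tPhi n TB.
Proof. by []. Qed.

(* Type C has no short roots, so removing R_0 is vacuous there. *)
Lemma tPhiC_tPhi n : tPhiC n = tPhi n TC.
Proof.
apply: eq_in_filter => a aP.
by case: (boolP (a \in _)) => [/(posroot_short_TB aP) // | _]; rewrite andbT.
Qed.

Lemma lemma3p4_B (n : nat) (D : seq 'rV[rat]_n.+1) :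
  orthoset TB D -> eps ord0 \in D ->
  (forall k : 'I_n.+1, k != ord0 -> eps k \notin D) ->
  let tD := [seq b <- D | b \in tPhiB n] in
  wlength (posroots n.+1 TB) (sigma D) =
    (wlength' (tPhiB n) (sigma tD) + size (colone n TB)
     + 2 * count (fun b => b \in plusroots n.+1) tD)%N.
Proof.
move=> [Du Dpos Dorth] e0D noshort tD; rewrite tPhiB_tPhi in tD *.
have tD_tPhi b : b \in tD -> [&& b \in posroots n.+1 TB, b 0 ord0 == 0 & b \notin shortroots n.+1].
  by rewrite mem_filter mem_filter => /andP[/andP[/andP[-> ->] ->]].
have tD_pos : {subset tD <= posroots n.+1 TB} by move=> b /tD_tPhi /and3P[].
have tD_first0 b : b \in tD -> b 0 ord0 = 0 by move=> /tD_tPhi /and3P[_ /eqP].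
have tD_E : [seq b <- D | b != eps ord0] = tD.
  apply: eq_in_filter => b bD; rewrite mem_filter (Dpos _ bD) andbT.
  case: (eqVneq b (eps ord0)) => [->|ne]; first by rewrite eps_first eqxx oner_eq0.
  rewrite -dot_epsr Dorth // eqxx /=; apply/esym/negP => /shortrootsP[k ek].
  have k0 : k != ord0 by apply: contraNneq ne => k0; rewrite ek k0.
  by move: (noshort k k0); rewrite -ek bD.
have sigmaE x : sigma D x = negfirst (sigma tD x).
  rewrite -tD_E; apply: sigma_negfirst => // [|b bD b0]; first exact: refl_eps0.
  by rewrite -dot_epsr Dorth.
have tD_TD : {subset tD <= posroots n.+1 TD}.
  move=> b /tD_tPhi /and3P[bP _ ns]; move: bP.
  by rewrite /posroots cats0 catA mem_cat (negbTE ns) orbF.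
have tD_orth a b : a \in tD -> b \in tD -> a != b -> dot a b = 0.
  by rewrite !mem_filter => /andP[_ aD] /andP[_ bD]; apply: Dorth.
rewrite (wlength_decomp tD_pos tD_first0 sigmaE) (addnC (wlength' _ _)).
rewrite -(neg_count (filter_uniq _ Du) tD_TD tD_orth); congr (_ + _)%N.
apply: eq_count => j /=.
by rewrite /posroots !mem_cat mem_shortroots !orbT.
Qed.

Lemma lemma3p4_C (n : nat) (D : seq 'rV[rat]_n.+1) :
  orthoset TC D ->
  (forall b, b \in D -> (b 0 ord0 != 0) = (b == 2%:R *: eps ord0)) ->
  2%:R *: eps ord0 \in D ->
  let tD := [seq b <- D | b \in tPhiC n] in
  wlength (posroots n.+1 TC) (sigma D) = (wlength' (tPhiC n) (sigma tD) + size (colone n TC))%N.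
Proof.
move=> [Du Dpos Dorth] col1 r0D tD; rewrite tPhiC_tPhi in tD *.
have tD_E : [seq b <- D | b != 2%:R *: eps ord0] = tD.
  apply: eq_in_filter => b bD; rewrite -col1 // negbK /tPhi mem_filter (Dpos _ bD) andbT.
  by case: eqP => // _; case: (boolP (b \in _)) => [/(posroot_short_TB (Dpos _ bD)) | _].
have tD_pos : {subset tD <= posroots n.+1 TC} by move=> b; rewrite mem_filter => /andP[_ /Dpos].
have tD_first0 b : b \in tD -> b 0 ord0 = 0.
  by rewrite -tD_E mem_filter => /andP[b0 bD]; apply/eqP; rewrite -[_ == 0]negbK col1.
have sigmaE x : sigma D x = negfirst (sigma tD x).
  rewrite -tD_E; apply: sigma_negfirst => // [|b bD b0]; first exact: refl_2eps0.
  by apply/eqP; rewrite -[_ == 0]negbK col1.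
rewrite (wlength_decomp tD_pos tD_first0 sigmaE) (@eq_count _ _ pred0).
  by rewrite count_pred0 addn0 addnC.
by move=> j /=; rewrite (negbTE (eps_notin_posroots j _)).
Qed.

Theorem lemma3p4 :
  (forall (n : nat) (D : seq 'rV[rat]_n.+1),
     orthoset TB D ->
     eps ord0 \in D ->
     (forall k : 'I_n.+1, k != ord0 -> eps k \notin D) ->
     let tD := [seq b <- D | b \in tPhiB n] in
     wlength (@posroots n.+1 TB) (sigma D) =
       (wlength' (tPhiB n) (sigma tD) + size (colone n TB)
        + 2 * count (fun b => b \in @plusroots n.+1) tD)%N)
  /\
  (forall (n : nat) (D : seq 'rV[rat]_n.+1),
     orthoset TC D ->
     (forall b, b \in D -> (b 0 ord0 != 0) = (b == 2%:R *: eps ord0)) ->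
     2%:R *: eps ord0 \in D ->
     let tD := [seq b <- D | b \in tPhiC n] in
     wlength (@posroots n.+1 TC) (sigma D) =
       (wlength' (tPhiC n) (sigma tD) + size (colone n TC))%N).
Proof. by split; [exact: lemma3p4_B | exact: lemma3p4_C]. Qed.
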